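(* Let $\tau$ be an infinitesimal bending of an isometric immersion $f\colon M^n\to\mathbb{R}^{n+p}$. Then at every point of $M^n$ the bilinear form $\theta\colon TM\times TM\to N_fM\oplus N_fM$ defined by $$\theta(X,Y)=(\alpha(X,Y)+\beta(X,Y),\ \alpha(X,Y)-\beta(X,Y))$$ is flat with respect to the indefinite inner product $\langle\!\langle(\xi_1,\eta_1),(\xi_2,\eta_2)\rangle\!\rangle=\langle\xi_1,\xi_2\rangle-\langle\eta_1,\eta_2\rangle$ on $N_fM\oplus N_fM$.
   Context: $\alpha$ is the second fundamental form of $f$ and $N_fM$ its normal bundle. An infinitesimal bending of $f$ is a smooth map $\tau\colon M^n\to\mathbb{R}^{n+p}$ with $\langle f_*X,\tilde\nabla_X\tau\rangle=0$ for all tangent $X$, $\tilde\nabla$ the Euclidean connection. Set $LX=\tilde\nabla_X\tau$ and $B(X,Y)=\tilde\nabla_X(LY)-L\nabla_XY$; $\beta(X,Y)$ is the component of $B(X,Y)$ normal to $f$. A bilinear form $\mathcal{B}\colon V\times U\to W$ into a space with an (possibly indefinite) inner product is flat if $\langle\mathcal{B}(X,Z),\mathcal{B}(Y,W)\rangle-\langle\mathcal{B}(X,W),\mathcal{B}(Y,Z)\rangle=0$ for all $X,Y\in V$, $Z,W\in U$. *)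

(* Local (chart) formalization:
   M^n is represented by an open set U of R^n (row vectors 'rV[R]_n) and the
   metric on M is the one induced by f (isometric immersion). *)
From HB Require Import structures.
From mathcomp Require Import all_boot all_order all_algebra.
From mathcomp Require Import all_classical all_reals all_analysis.
Set Implicit Arguments. Unset Strict Implicit. Unset Printing Implicit Defensive.
Import Order.TTheory GRing.Theory Num.Theory.
Import numFieldNormedType.Exports.
Local Open Scope classical_set_scope.
Local Open Scope ring_scope.

Section Defs.
Variable R : realType.

Definition dot (m : nat) (u v : 'rV[R]_m) : R := \sum_(i < m) u ord0 i * v ord0 i.

Fixpoint Dn (n m : nat) (vs : seq 'rV[R]_n) (g : 'rV[R]_n -> 'rV[R]_m)
  : 'rV[R]_n -> 'rV[R]_m :=
  match vs with
  | [::] => g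
  | v :: vs' => fun x => derive (Dn vs' g) x v
  end.

(* smoothness (C^infinity) on U: every iterated directional derivative is
   differentiable at every point of U. *)
Definition smooth_on (n m : nat) (U : set 'rV[R]_n) (g : 'rV[R]_n -> 'rV[R]_m) :=
  forall (vs : seq 'rV[R]_n) x, U x -> differentiable (Dn vs g) x.

Definition immersion_on (n m : nat) (U : set 'rV[R]_n) (f : 'rV[R]_n -> 'rV[R]_m) :=
  forall x, U x -> forall v : 'rV[R]_n, derive f x v = 0 -> v = 0.

Definition inf_bending (n m : nat) (U : set 'rV[R]_n) (f tau : 'rV[R]_n -> 'rV[R]_m) :=
  forall x, U x -> forall X : 'rV[R]_n, dot (derive f x X) (derive tau x X) = 0.

Section Point.
Variables (n m : nat) (f tau : 'rV[R]_n -> 'rV[R]_m) (x : 'rV[R]_n).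

Definition jac : 'M[R]_(n, m) :=
  \matrix_(i < n, j < m) derive f x (delta_mx 0 i) ord0 j.

(* coordinates (w.r.t. e_1..e_n) of the tangent part of w in f_*T_xM *)
Definition tan_coord (w : 'rV[R]_m) : 'rV[R]_n :=
  w *m jac^T *m invmx (jac *m jac^T).

Definition tan_part (w : 'rV[R]_m) : 'rV[R]_m := tan_coord w *m jac.
Definition nor_part (w : 'rV[R]_m) : 'rV[R]_m := w - tan_part w.

(* second derivative: D_X (D_Y g) at x (X, Y extended as constant fields) *)
Definition D2 (g : 'rV[R]_n -> 'rV[R]_m) (X Y : 'rV[R]_n) : 'rV[R]_m :=
  derive (fun y => derive g y Y) x X.

(* Levi-Civita connection of the induced metric (coordinates), for X, Y
   constant coordinate fields: f_*(nabla_X Y) = tangent part of D_X f_* Y. *)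
Definition nablaXY (X Y : 'rV[R]_n) : 'rV[R]_n := tan_coord (D2 f X Y).

Definition sff (X Y : 'rV[R]_n) : 'rV[R]_m := nor_part (D2 f X Y).

Definition Bform (X Y : 'rV[R]_n) : 'rV[R]_m :=
  D2 tau X Y - derive tau x (nablaXY X Y).

Definition beta (X Y : 'rV[R]_n) : 'rV[R]_m := nor_part (Bform X Y).

Definition theta (X Y : 'rV[R]_n) : 'rV[R]_m * 'rV[R]_m :=
  (sff X Y + beta X Y, sff X Y - beta X Y).

End Point.

Definition ip2 (m : nat) (a b : 'rV[R]_m * 'rV[R]_m) : R :=
  dot a.1 b.1 - dot a.2 b.2.

End Defs.

Definition flat (R : ringType) (V U W : Type) (B : V -> U -> W) (ip : W -> W -> R) :=
  forall (X Y : V) (Z Wv : U), ip (B X Z) (B Y Wv) - ip (B X Wv) (B Y Z) = 0.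

From HB Require Import structures.
From mathcomp Require Import all_boot all_order all_algebra.
From mathcomp Require Import all_classical all_reals all_analysis.
From mathcomp Require Import ring lra.
Set Implicit Arguments.
Unset Strict Implicit.
Unset Printing Implicit Defensive.
Import Order.TTheory GRing.Theory Num.Theory.
Import numFieldNormedType.Exports.
Local Open Scope classical_set_scope.
Local Open Scope ring_scope.

(* Expanding the indefinite product, flatness of theta says that
   <alpha(X,Z), beta(Y,W)> + <alpha(Y,W), beta(X,Z)> is symmetric in Z and W.
   Differentiating the polarized bending condition
   <f_* Y, tau_* Z> + <f_* Z, tau_* Y> = 0 and using the symmetry of second
   derivatives gives <D^2 f(X,Y), tau_* Z> + <f_* Z, D^2 tau(X,Y)> = 0.  Splitting
   D^2 f and D^2 tau into tangent and normal parts, this identity turns the quantity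
   above into <D^2 f(X,Z), D^2 tau(Y,W)> + <D^2 f(Y,W), D^2 tau(X,Z)>, and
   differentiating the identity once more, the third derivatives cancel by symmetry,
   which leaves exactly the required symmetry in Z and W. *)

Section SecondDerivativeSymmetry.
Variables (R : realType) (V : normedModType R).
Implicit Types (h : V -> R) (y z X Y : V).

Lemma is_derive_line h (c X : V) (t : R) :
  derivable h (c + t *: X) X ->
  is_derive t 1 (fun s => h (c + s *: X)) ('D_X h (c + t *: X)).
Proof.
move=> dh.
have quotE : (fun e : R => e^-1 *: (h (c + (e *: 1 + t) *: X) - h (c + t *: X))) =
             (fun e => e^-1 *: (h (e *: X + (c + t *: X)) - h (c + t *: X))).
  by apply/funext => e; rewrite [e *: 1]mulr1 scalerDl addrCA addrC.
by apply: DeriveDef; rewrite /derivable /derive /= quotE.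
Qed.

Definition second_diff h y (u v : V) := h (y + u + v) - h (y + u) - h (y + v) + h y.

Lemma second_diffC h y u v : second_diff h y u v = second_diff h y v u.
Proof. by rewrite /second_diff (addrAC y u v); lra. Qed.

Lemma second_diff_mvt h (S : set V) y X Y (s : R) : 0 < s ->
  (forall t r, t \in `[0, s] -> r \in `[0, s] -> S (y + t *: X + r *: Y)) ->
  (forall z, S z -> derivable h z X) ->
  (forall z, S z -> derivable ('D_X h) z Y) ->
  exists t r, [/\ t \in `[0, s], r \in `[0, s] &
    second_diff h y (s *: X) (s *: Y) = s * s * 'D_Y ('D_X h) (y + t *: X + r *: Y)].
Proof.
move=> s0 Ssq dhX dhXY.
have s_in : s \in `[0, s] by rewrite in_itv /= lexx ltW.
have z_in : 0 \in `[0, s] by rewrite in_itv /= lexx ltW.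
pose u t := h (y + s *: Y + t *: X) - h (y + t *: X).
pose du t := 'D_X h (y + s *: Y + t *: X) - 'D_X h (y + t *: X).
have u_der t : t \in `[0, s] -> is_derive t 1 u (du t).
  move=> ts; apply: is_deriveB; apply: is_derive_line; apply: dhX.
    by rewrite addrAC; apply: Ssq.
  by rewrite -[y + _]addr0 -(scale0r Y); apply: Ssq.
have u_cont : {within `[0, s], continuous u}.
  by apply: derivable_within_continuous => t /u_der [].
have [t tin uE] := MVT s0 (fun t tin => u_der t (subset_itv_oo_cc tin)) u_cont.
pose v r := 'D_X h (y + t *: X + r *: Y).
have v_der r : r \in `[0, s] -> is_derive r 1 v ('D_Y ('D_X h) (y + t *: X + r *: Y)).
  by move=> rs; apply: is_derive_line; apply: dhXY; apply: Ssq => //; apply: subset_itv_oo_cc.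
have v_cont : {within `[0, s], continuous v}.
  by apply: derivable_within_continuous => r /v_der [].
have [r rin vE] := MVT s0 (fun r rin => v_der r (subset_itv_oo_cc rin)) v_cont.
exists t, r; split; [exact: subset_itv_oo_cc|exact: subset_itv_oo_cc|].
have -> : second_diff h y (s *: X) (s *: Y) = u s - u 0.
  by rewrite /second_diff /u !scale0r !addr0 (addrAC y); lra.
move: vE; rewrite /v scale0r addr0 (addrAC y (t *: X)) => vE.
by rewrite uE /du vE !subr0 -mulrA mulrC.
Qed.

Lemma near_square (P : set V) y X Y : (\forall z \near y, P z) ->
  exists2 s : R, 0 < s &
    forall t r, t \in `[0, s] -> r \in `[0, s] -> P (y + t *: X + r *: Y).
Proof.
move=> /nbhs_ballP[d d0 Pd]; pose K := `|X| + `|Y|.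
have K1 : 0 < K + 1 by rewrite ltr_wpDl ?addr_ge0.
exists (d / (K + 1)) => [|t r]; first by rewrite divr_gt0.
rewrite !in_itv /= => /andP[t0 ts] /andP[r0 rs]; apply: Pd.
rewrite -ball_normE /ball_ /= -addrA opprD addrA subrr add0r normrN.
rewrite (le_lt_trans (ler_normD _ _)) // !normrZ !ger0_norm //.
have tr_le : t * `|X| + r * `|Y| <= d / (K + 1) * K.
  by rewrite mulrDr lerD // ler_wpM2r.
apply: (le_lt_trans tr_le).
by rewrite mulrAC ltr_pdivrMr // ltr_pM2l // ltrDl.
Qed.

Lemma derive2C_scalar h (U : set V) y X Y : open U -> U y ->
  (forall z, U z -> derivable h z X) -> (forall z, U z -> derivable h z Y) ->
  (forall z, U z -> derivable ('D_X h) z Y) ->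
  (forall z, U z -> derivable ('D_Y h) z X) ->
  {for y, continuous ('D_Y ('D_X h))} -> {for y, continuous ('D_X ('D_Y h))} ->
  'D_Y ('D_X h) y = 'D_X ('D_Y h) y.
Proof.
(* Near y both mixed partials equal second_diff / s^2 at some point of a small
   square (second_diff_mvt), and second_diff is symmetric. *)
move=> oU Uy dhX dhY dhXY dhYX cXY cYX.
set A := 'D_Y ('D_X h); set B := 'D_X ('D_Y h).
apply/eqP; rewrite -subr_eq0 -normr_le0; apply/ler_addgt0Pr => e e0; rewrite add0r.
have e2 : 0 < e / 2 by rewrite divr_gt0.
pose P z := U z /\ `|A y - A z| < e / 2 /\ `|B y - B z| < e / 2.
have nearP : \forall z \near y, P z.
  have nearU : \forall z \near y, U z := open_nbhs_nbhs (conj oU Uy).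
  have nearA : \forall z \near y, `|A y - A z| < e / 2.
    by move/cvgrPdist_lt: cXY; apply.
  have nearB : \forall z \near y, `|B y - B z| < e / 2.
    by move/cvgrPdist_lt: cYX; apply.
  exact: filterS3 _ (fun z Uz Az Bz => conj Uz (conj Az Bz)) nearU nearA nearB.
have [s s0 sqXY] := near_square X Y nearP.
have sqYX t r : t \in `[0, s] -> r \in `[0, s] -> P (y + t *: Y + r *: X).
  by move=> ts rs; rewrite addrAC; apply: sqXY.
have [t1 [r1 [t1s r1s E1]]] := second_diff_mvt s0 sqXY
  (fun z Pz => dhX z Pz.1) (fun z Pz => dhXY z Pz.1).
have [t2 [r2 [t2s r2s E2]]] := second_diff_mvt s0 sqYX
  (fun z Pz => dhY z Pz.1) (fun z Pz => dhYX z Pz.1).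
have AB : A (y + t1 *: X + r1 *: Y) = B (y + t2 *: Y + r2 *: X).
  apply: (@mulfI _ (s * s)); first by rewrite mulf_neq0 // gt_eqF.
  exact: etrans (esym E1) (etrans (second_diffC h y _ _) E2).
have [_ [A_near _]] := sqXY t1 r1 t1s r1s.
have [_ [_ B_near]] := sqYX t2 r2 t2s r2s.
have -> : A y - B y = (A y - A (y + t1 *: X + r1 *: Y)) - (B y - B (y + t2 *: Y + r2 *: X)).
  by rewrite AB opprB addrA subrK.
apply: le_trans (ler_normB _ _) _; rewrite [leRHS]splitr.
exact: lerD (ltW A_near) (ltW B_near).
Qed.

End SecondDerivativeSymmetry.

Section MatrixValued.
Variables (R : realType) (V : normedModType R) (p q : nat).
Implicit Types (G : V -> 'M[R]_(p, q)).

Lemma derive_entry G z v i j :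
  derivable G z v -> 'D_v (fun w => G w i j) z = 'D_v G z i j.
Proof. by move=> dG; rewrite (derive_mx dG) mxE. Qed.

Lemma derivable_entry G z v i j :
  derivable G z v -> derivable (fun w => G w i j) z v.
Proof. by move=> dG; apply: (derivable_mxP G z v).1. Qed.

Lemma differentiable_entry G z i j :
  differentiable G z -> differentiable (fun w => G w i j) z.
Proof. by move=> dG; apply: differentiable_comp dG (differentiable_coord _ i j). Qed.

Lemma derive2C G (U : set V) y X Y : open U -> U y ->
  (forall z, U z -> differentiable G z) ->
  (forall v z, U z -> differentiable ('D_v G) z) ->
  (forall u v, differentiable ('D_u ('D_v G)) y) ->
  'D_Y ('D_X G) y = 'D_X ('D_Y G) y.
Proof.
move=> oU Uy dG dDG dD2G; apply/matrixP => i j.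
pose h w := G w i j.
have nearU z : U z -> \forall w \near z, U w.
  by move=> Uz; exact: open_nbhs_nbhs.
have Dh v z : U z -> 'D_v h z = 'D_v G z i j.
  by move=> Uz; apply/derive_entry/diff_derivable/dG.
have Dh_near v z : U z -> {near z, (fun w => 'D_v G w i j) =1 'D_v h}.
  by move=> Uz; apply: filterS (nearU z Uz) => w Uw; rewrite Dh.
have D2h u v z : U z -> 'D_u ('D_v h) z = 'D_u ('D_v G) z i j.
  move=> Uz; rewrite -(near_eq_derive _ (Dh_near v z Uz)).
  exact/derive_entry/diff_derivable/dDG.
have dDh u v z : U z -> derivable ('D_v h) z u.
  move=> Uz; apply: near_eq_derivable (Dh_near v z Uz) _.
  exact/derivable_entry/diff_derivable/dDG.
have cD2h u v : {for y, continuous ('D_u ('D_v h))}.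
  have E : {near y, (fun z => 'D_u ('D_v G) z i j) =1 'D_u ('D_v h)}.
    by apply: filterS (nearU y Uy) => z Uz; rewrite D2h.
  apply: cvg_trans (near_eq_cvg E) _; rewrite D2h //.
  exact/differentiable_continuous/differentiable_entry.
have dh v z : U z -> derivable h z v.
  by move=> Uz; apply/derivable_entry/diff_derivable/dG.
apply: etrans (esym (D2h Y X y Uy)) (etrans _ (D2h X Y y Uy)).
exact: derive2C_scalar oU Uy (dh X) (dh Y) (dDh Y X) (dDh X Y) (cD2h Y X) (cD2h X Y).
Qed.

End MatrixValued.

Lemma smooth_D2C (R : realType) n m (U : set 'rV[R]_n) (g : 'rV[R]_n -> 'rV[R]_m) y X Y :
  open U -> smooth_on U g -> U y -> D2 y g X Y = D2 y g Y X.
Proof.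
move=> oU sg Uy; symmetry.
apply: derive2C oU Uy (sg [::]) (fun v => sg [:: v]) (fun u v => sg [:: u; v] y Uy).
Qed.

Section Dot.
Variable R : realType.

Lemma dotE m (u v : 'rV[R]_m) : dot u v = (u *m v^T) 0 0.
Proof. by rewrite /dot mxE; apply: eq_bigr => i _; rewrite mxE. Qed.

Lemma dotC m (u v : 'rV[R]_m) : dot u v = dot v u.
Proof. by apply: eq_bigr => i _; rewrite mulrC. Qed.

Lemma dotDl m (u v w : 'rV[R]_m) : dot (u + v) w = dot u w + dot v w.
Proof. by rewrite !dotE mulmxDl mxE. Qed.

Lemma dotDr m (u v w : 'rV[R]_m) : dot u (v + w) = dot u v + dot u w.
Proof. by rewrite !(dotC u) dotDl. Qed.

Lemma dotNl m (u v : 'rV[R]_m) : dot (- u) v = - dot u v.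
Proof. by rewrite !dotE mulNmx mxE. Qed.

Lemma dotNr m (u v : 'rV[R]_m) : dot u (- v) = - dot u v.
Proof. by rewrite !(dotC u) dotNl. Qed.

Lemma dotBl m (u v w : 'rV[R]_m) : dot (u - v) w = dot u w - dot v w.
Proof. by rewrite dotDl dotNl. Qed.

Lemma dotBr m (u v w : 'rV[R]_m) : dot u (v - w) = dot u v - dot u w.
Proof. by rewrite dotDr dotNr. Qed.

Lemma dot0r m (u : 'rV[R]_m) : dot u 0 = 0.
Proof. by rewrite dotE trmx0 mulmx0 mxE. Qed.

Lemma dot_mulmxl p m (u : 'rV[R]_p) (v : 'rV[R]_m) (M : 'M[R]_(p, m)) :
  dot (u *m M) v = dot u (v *m M^T).
Proof. by rewrite !dotE trmx_mul trmxK mulmxA. Qed.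

Lemma dot_mulmxr p m (u : 'rV[R]_m) (v : 'rV[R]_p) (M : 'M[R]_(p, m)) :
  dot u (v *m M) = dot (u *m M^T) v.
Proof. by rewrite dotC dot_mulmxl dotC. Qed.

Lemma dot_self_eq0 m (u : 'rV[R]_m) : dot u u = 0 -> u = 0.
Proof.
move=> uu0; apply/rowP => i; rewrite mxE.
have /eqP : u 0 i * u 0 i = 0.
  by apply: (psumr_eq0P _ uu0) => // k _; exact: sqr_ge0.
by rewrite mulf_eq0 orbb => /eqP.
Qed.

Lemma mulmx_trmx_dot p q m (M : 'M[R]_(p, m)) (N : 'M[R]_(q, m)) i j :
  (M *m N^T) i j = dot (row i M) (row j N).
Proof. by rewrite mxE; apply: eq_bigr => k _; rewrite !mxE. Qed.

Lemma mulmx_trmx_skew n m (J T : 'M[R]_(n, m)) :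
  (forall i j, dot (row i J) (row j T) + dot (row j J) (row i T) = 0) ->
  J *m T^T + T *m J^T = 0.
Proof.
move=> JT0; apply/matrixP => i j; rewrite [LHS]mxE [RHS]mxE !mulmx_trmx_dot.
by rewrite (dotC (row i T)); apply: JT0.
Qed.

Lemma mulmx_trmx_compatible n m (J T : 'M[R]_(n, m)) (a b : 'rV[R]_m) :
  (forall k, dot a (row k T) + dot (row k J) b = 0) -> b *m J^T + a *m T^T = 0.
Proof.
move=> abJT0; apply/rowP => k; rewrite [LHS]mxE [RHS]mxE !mulmx_trmx_dot !row_id.
by rewrite addrC (dotC b); apply: abJT0.
Qed.

End Dot.

Lemma flat_sum_diff (R : realType) (T : Type) m (a b : T -> T -> 'rV[R]_m) :
  (forall X Z Y W, dot (a X Z) (b Y W) + dot (a Y W) (b X Z) =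
                   dot (a X W) (b Y Z) + dot (a Y Z) (b X W)) ->
  flat (fun X Y => (a X Y + b X Y, a X Y - b X Y)) (@ip2 R m).
Proof.
move=> absym X Y Z W; have := absym X Z Y W; rewrite /ip2 /=.
rewrite !(dotDl, dotDr, dotNl, dotNr) (dotC (b X Z)) (dotC (b X W)); lra.
Qed.

Section TangentProjection.
Variables (R : comUnitRingType) (n m : nat) (J : 'M[R]_(n, m)).

Definition tan_proj := J^T *m invmx (J *m J^T) *m J.

Lemma tan_projT : tan_proj^T = tan_proj.
Proof. by rewrite /tan_proj !trmx_mul trmx_inv trmx_mul trmxK mulmxA. Qed.

Lemma tan_proj_idem : J *m J^T \in unitmx -> tan_proj *m tan_proj = tan_proj.
Proof.
move=> uG; rewrite /tan_proj !mulmxA -(mulmxA _ J) -(mulmxA _ (J *m J^T)).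
by rewrite mulmxV // mulmx1.
Qed.

End TangentProjection.

Section NormalComponents.
Variables (R : realType) (n m : nat) (J T : 'M[R]_(n, m)).
Hypotheses (J_row_free : J *m J^T \in unitmx) (JT_skew : J *m T^T + T *m J^T = 0).
Local Notation P := (tan_proj J).
Local Notation N := (1%:M - tan_proj J).
Local Notation S := (J^T *m invmx (J *m J^T) *m T).
(* P and N project onto the tangent and normal spaces; S is the matrix of
   w |-> L (tangent coordinates of w). *)

Lemma normal_projT : N^T = N.
Proof. by rewrite linearB /= trmx1 tan_projT. Qed.

Lemma normal_proj_idem : N *m N = N.
Proof.
by rewrite mulmxBl mul1mx mulmxBr mulmx1 tan_proj_idem // subrr subr0.
Qed.

Lemma dot_normal_proj (u v : 'rV[R]_m) : dot (u *m N) (v *m N) = dot u (v *m N).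
Proof. by rewrite dot_mulmxl normal_projT -mulmxA normal_proj_idem. Qed.

Lemma tan_proj_compatible (a b : 'rV[R]_m) :
  b *m J^T + a *m T^T = 0 -> b *m P = - (a *m S^T).
Proof.
move=> /eqP; rewrite addr_eq0 => /eqP bJ.
rewrite /tan_proj !mulmxA bJ !trmx_mul trmxK trmx_inv trmx_mul trmxK.
by rewrite !mulNmx !mulmxA.
Qed.

Lemma tan_proj_skew : S *m P + P *m S^T = 0.
Proof.
have -> : S *m P + P *m S^T =
    J^T *m invmx (J *m J^T) *m (T *m J^T + J *m T^T) *m invmx (J *m J^T) *m J.
  rewrite !trmx_mul trmxK trmx_inv trmx_mul trmxK /tan_proj.
  by rewrite mulmxDr mulmxDl mulmxDl !mulmxA.
by rewrite addrC JT_skew mulmx0 !mul0mx.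
Qed.

(* With J = jac f x, [tcoord] and [nor] are [tan_coord] and [nor_part], and T is
   the matrix of L = tau_*, so [sff] and [beta] unfold to the left-hand side below. *)
Local Notation tcoord w := (w *m J^T *m invmx (J *m J^T)).
Local Notation nor w := (w - tcoord w *m J).

Lemma dot_normal_parts (L : 'rV[R]_n -> 'rV[R]_m) (a1 b1 a2 b2 : 'rV[R]_m) :
  (forall v, L v = v *m T) ->
  b1 *m J^T + a1 *m T^T = 0 -> b2 *m J^T + a2 *m T^T = 0 ->
  dot (nor a1) (nor (b2 - L (tcoord a2))) + dot (nor a2) (nor (b1 - L (tcoord a1))) =
  dot a1 b2 + dot a2 b1.
Proof.
move=> LT /tan_proj_compatible b1P /tan_proj_compatible b2P.
have norE w : nor w = w *m N by rewrite mulmxBr mulmx1 /tan_proj !mulmxA.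
have LE a : L (tcoord a) = a *m S by rewrite LT !mulmxA.
rewrite !LE !norE.
have E1 : dot (a1 *m N) ((b2 - a2 *m S) *m N) =
    dot a1 b2 - dot a1 (a2 *m S) + dot a1 (a2 *m S^T) + dot a1 (a2 *m (S *m P)).
  rewrite dot_normal_proj mulmxBr mulmx1 mulmxBl !dotBr b2P dotNr -(mulmxA a2 S P).
  lra.
have E2 : dot (a2 *m N) ((b1 - a1 *m S) *m N) =
    dot b1 a2 + dot a1 (a2 *m S) - dot a1 (a2 *m S^T) + dot a1 (a2 *m (P *m S^T)).
  rewrite dotC dot_normal_proj dotBl (dot_mulmxl a1) !mulmxBr mulmx1 !dotBr.
  rewrite (dot_mulmxr b1) tan_projT b1P dotNl dot_mulmxl trmxK mulmxBl dotBr.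
  rewrite -(mulmxA a2 P); lra.
have E3 : dot a1 (a2 *m (S *m P)) + dot a1 (a2 *m (P *m S^T)) = 0.
  by rewrite -dotDr -mulmxDr tan_proj_skew mulmx0 dot0r.
rewrite E1 E2 (dotC a2); lra.
Qed.

End NormalComponents.

Section DotCalculus.
Variables (R : realType) (V : normedModType R) (m : nat).
Implicit Types u v : V -> 'rV[R]_m.

Lemma dot_funE u v :
  (fun w => dot (u w) (v w)) = \sum_(i < m) ((fun w => u w 0 i) * (fun w => v w 0 i)).
Proof. by apply/funext => w; rewrite fct_sumE. Qed.

Lemma derivable_dot u v z X : derivable u z X -> derivable v z X ->
  derivable (fun w => dot (u w) (v w)) z X.
Proof.
move=> du dv; rewrite dot_funE; apply: derivable_sum => i.
by apply: derivableM; apply: derivable_entry.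
Qed.

Lemma derive_dot u v z X : derivable u z X -> derivable v z X ->
  'D_X (fun w => dot (u w) (v w)) z = dot ('D_X u z) (v z) + dot (u z) ('D_X v z).
Proof.
move=> du dv; rewrite dot_funE derive_sum; last first.
  by move=> i; apply: derivableM; apply: derivable_entry.
rewrite -big_split; apply: eq_bigr => i _.
rewrite deriveM; [|exact: derivable_entry|exact: derivable_entry].
rewrite (derive_entry 0 i du) (derive_entry 0 i dv).
rewrite /GRing.scale /=; lra.
Qed.

Lemma derive_dot2 u1 v1 u2 v2 z X :
  derivable u1 z X -> derivable v1 z X -> derivable u2 z X -> derivable v2 z X ->
  'D_X (fun w => dot (u1 w) (v1 w) + dot (u2 w) (v2 w)) z =
  dot ('D_X u1 z) (v1 z) + dot (u1 z) ('D_X v1 z) +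
  (dot ('D_X u2 z) (v2 z) + dot (u2 z) ('D_X v2 z)).
Proof.
move=> du1 dv1 du2 dv2.
rewrite deriveD; [|exact: derivable_dot du1 dv1|exact: derivable_dot du2 dv2].
by rewrite !derive_dot.
Qed.

End DotCalculus.

Lemma derive_eq0_on (R : realType) (V W : normedModType R) (g : V -> W) (U : set V) z v :
  open U -> U z -> (forall w, U w -> g w = 0) -> 'D_v g z = 0.
Proof.
move=> oU Uz g0.
have g0_near : \forall w \near z, g w = cst 0 w.
  by apply: filterS (open_nbhs_nbhs (conj oU Uz)) => w /g0.
by rewrite (near_eq_derive _ g0_near) derive_cst.
Qed.

Lemma sym_skew_eq0 (R : numFieldType) (T : Type) (G : T -> T -> T -> R) :
  (forall x y z, G x y z = G y x z) -> (forall x y z, G x y z + G x z y = 0) ->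
  forall x y z, G x y z = 0.
Proof.
move=> sym skew0 x y z.
have skew a b c : G a b c = - G a c b by apply/eqP; rewrite -addr_eq0 skew0.
have := skew x y z; rewrite sym skew sym skew sym skew => /eqP.
by rewrite -subr_eq0 opprK -mulr2n mulrn_eq0 /= => /eqP.
Qed.

Lemma addr_cancel_out (V : zmodType) (p p' q q' a b c d : V) :
  p = p' -> q = q' -> p + a + (b + q) = p' + c + (d + q') -> a + b = c + d.
Proof. by move=> <- <-; rewrite -!addrA => /addrI; rewrite !addrA => /addIr. Qed.

Section Jacobian.
Variables (R : realType) (n m : nat).

Lemma jac_derive (g : 'rV[R]_n -> 'rV[R]_m) z v :
  differentiable g z -> 'D_v g z = v *m jac g z.
Proof.
move=> dg; rewrite deriveEjacobian //; congr (_ *m _).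
by apply/matrixP => i j; rewrite !mxE deriveE.
Qed.

Lemma row_jac (g : 'rV[R]_n -> 'rV[R]_m) z i :
  row i (jac g z) = 'D_(delta_mx 0 i) g z.
Proof. by apply/rowP => j; rewrite !mxE. Qed.

Lemma smooth_Dn (U : set 'rV[R]_n) (g : 'rV[R]_n -> 'rV[R]_m) ws :
  smooth_on U g -> smooth_on U (Dn ws g).
Proof.
have Dn_cat vs : Dn vs (Dn ws g) = Dn (vs ++ ws) g by elim: vs => //= v vs ->.
by move=> sg vs z Uz; rewrite Dn_cat; apply: sg.
Qed.

End Jacobian.

Section InfinitesimalBending.
Variables (R : realType) (n m : nat) (U : set 'rV[R]_n) (f tau : 'rV[R]_n -> 'rV[R]_m).
Hypotheses (oU : open U) (sf : smooth_on U f) (st : smooth_on U tau)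
  (bend : inf_bending U f tau).

Let dDf Y z v : U z -> derivable ('D_Y f) z v.
Proof. by move=> Uz; apply/diff_derivable/(sf [:: Y]). Qed.

Let dDtau Y z v : U z -> derivable ('D_Y tau) z v.
Proof. by move=> Uz; apply/diff_derivable/(st [:: Y]). Qed.

Let dD2f X Y z v : U z -> derivable (fun w => D2 w f X Y) z v.
Proof. by move=> Uz; apply/diff_derivable/(sf [:: X; Y]). Qed.

Let dD2tau X Y z v : U z -> derivable (fun w => D2 w tau X Y) z v.
Proof. by move=> Uz; apply/diff_derivable/(st [:: X; Y]). Qed.

Lemma bending_polar z Y Z : U z ->
  dot ('D_Y f z) ('D_Z tau z) + dot ('D_Z f z) ('D_Y tau z) = 0.
Proof.
move=> Uz; have := bend Uz (Y + Z); have := bend Uz Y; have := bend Uz Z.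
rewrite !(jac_derive _ (sf [::] Uz)) !(jac_derive _ (st [::] Uz)).
rewrite !mulmxDl !dotDl !dotDr; lra.
Qed.

Lemma bending_D2 z X Y Z : U z ->
  dot (D2 z f X Y) ('D_Z tau z) + dot ('D_Z f z) (D2 z tau X Y) = 0.
Proof.
move=> Uz; move: X Y Z.
apply: (sym_skew_eq0 (G := fun X Y Z =>
  dot (D2 z f X Y) ('D_Z tau z) + dot ('D_Z f z) (D2 z tau X Y))) => X Y Z.
  by rewrite (smooth_D2C X Y oU sf Uz) (smooth_D2C X Y oU st Uz).
(* [:> R] states the equation in R rather than in its normed-module copy, which keeps
   the unifications below cheap. *)
have : 'D_X (fun w => dot ('D_Y f w) ('D_Z tau w) + dot ('D_Z f w) ('D_Y tau w)) z = 0 :> R.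
  by apply: derive_eq0_on oU Uz _ => w; apply: bending_polar.
rewrite (derive_dot2 (dDf Uz) (dDtau Uz) (dDf Uz) (dDtau Uz)) => <-.
have swap (a b c d : R) : a + d + (c + b) = a + b + (c + d).
  by rewrite addrACA [RHS]addrACA [d + b]addrC.
exact: swap.
Qed.

Lemma bending_D2_dot_sym z X Y V Z : U z ->
  dot (D2 z f X Y) (D2 z tau V Z) + dot (D2 z f V Z) (D2 z tau X Y) =
  dot (D2 z f V Y) (D2 z tau X Z) + dot (D2 z f X Z) (D2 z tau V Y).
Proof.
move=> Uz.
have D0 A B :
    'D_A (fun w => dot (D2 w f B Y) ('D_Z tau w) + dot ('D_Z f w) (D2 w tau B Y)) z = 0 :> R.
  by apply: derive_eq0_on oU Uz _ => w; apply: bending_D2.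
have DVX := D0 V X; have DXV := D0 X V.
rewrite (derive_dot2 (dD2f Uz) (dDtau Uz) (dDf Uz) (dD2tau Uz)) in DVX.
rewrite (derive_dot2 (dD2f Uz) (dDtau Uz) (dDf Uz) (dD2tau Uz)) in DXV.
have f3 : 'D_V (fun w => D2 w f X Y) z = 'D_X (fun w => D2 w f V Y) z :=
  smooth_D2C V X oU (smooth_Dn [:: Y] sf) Uz.
have t3 : 'D_V (fun w => D2 w tau X Y) z = 'D_X (fun w => D2 w tau V Y) z :=
  smooth_D2C V X oU (smooth_Dn [:: Y] st) Uz.
exact: addr_cancel_out (congr1 (fun u : 'rV[R]_m => dot u ('D_Z tau z)) f3)
  (congr1 (fun u : 'rV[R]_m => dot ('D_Z f z) u) t3) (etrans DVX (esym DXV)).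
Qed.

Lemma jac_skew z : U z -> jac f z *m (jac tau z)^T + jac tau z *m (jac f z)^T = 0.
Proof.
by move=> Uz; apply: mulmx_trmx_skew => i j; rewrite !row_jac; apply: bending_polar.
Qed.

Lemma D2_jac z X Y : U z ->
  D2 z tau X Y *m (jac f z)^T + D2 z f X Y *m (jac tau z)^T = 0.
Proof.
by move=> Uz; apply: mulmx_trmx_compatible => k; rewrite !row_jac; apply: bending_D2.
Qed.

Lemma jac_row_free z : immersion_on U f -> U z -> jac f z *m (jac f z)^T \in unitmx.
Proof.
move=> imm Uz; rewrite -row_free_unit; apply/inj_row_free => v vJJ.
apply: (imm z Uz); rewrite (jac_derive _ (sf [::] Uz)); apply: dot_self_eq0.
by rewrite dotE trmx_mul mulmxA -(mulmxA v) vJJ mul0mx mxE.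
Qed.

Lemma dot_sff_beta z X Z Y W : immersion_on U f -> U z ->
  dot (sff f z X Z) (beta f tau z Y W) + dot (sff f z Y W) (beta f tau z X Z) =
  dot (D2 z f X Z) (D2 z tau Y W) + dot (D2 z f Y W) (D2 z tau X Z).
Proof.
move=> imm Uz.
exact (dot_normal_parts (jac_row_free imm Uz) (jac_skew Uz)
  (fun v => jac_derive v (st [::] Uz)) (D2_jac X Z Uz) (D2_jac Y W Uz)).
Qed.

End InfinitesimalBending.

Unset Implicit Arguments.

Theorem lemma13 (R : realType) (n p : nat) (U : set 'rV[R]_n)
  (f tau : 'rV[R]_n -> 'rV[R]_(n + p)) :
  open U ->
  smooth_on U f -> immersion_on U f ->
  smooth_on U tau -> inf_bending U f tau ->
  forall x, U x -> flat (theta f tau x) (@ip2 R (n + p)).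
Proof.
move=> oU sf imm st bend x Ux; apply: flat_sum_diff => X Z Y W.
apply: etrans (dot_sff_beta oU sf st bend X Z Y W imm Ux) _.
apply: etrans (bending_D2_dot_sym oU sf st bend X Z Y W Ux) (etrans (addrC _ _) _).
exact/esym/(dot_sff_beta oU sf st bend X W Y Z imm Ux).
Qed.
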